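(* Let $n\ge k\ge 3$ and let $U_1$ be the unicyclic graph on $k$ vertices consisting of a triangle $v_1v_2v_3$ together with $k-3$ further vertices each adjacent only to $v_1$. Regard $U_1$ as a subgraph of $K_n$ and let $\Gamma=(K_n,U_1^-)$. Then, with $u=n-k$, $$\varphi(\Gamma,\lambda)=(\lambda+1)^{n-5}(\lambda-1)\Big(\lambda^4+(6-n)\lambda^3+(16-5n)\lambda^2+(4k-11n+4ku+18)\lambda+28k-31n+12ku+7\Big).$$
   Context: For a subgraph $H$ of $K_n$, $(K_n,H^-)$ denotes the signed complete graph on $n$ vertices whose negative edges are exactly the edges of $H$ (all other edges positive); its adjacency matrix has entry $-1$ for negative edges, $+1$ for positive edges and $0$ on the diagonal. $\varphi(\Gamma,\lambda)=\det(\lambda I-A(\Gamma))$. *)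

From HB Require Import structures.
From mathcomp Require Import all_boot all_order all_algebra.
Set Implicit Arguments. Unset Strict Implicit. Unset Printing Implicit Defensive.
Import Order.TTheory GRing.Theory Num.Theory.
Local Open Scope ring_scope.

(* Adjacency relation of the unicyclic graph U_1 on vertex set 'I_k:
   vertices 0,1,2 form the triangle v1 v2 v3 (v1 = 0), and every other
   vertex j >= 3 is adjacent only to vertex 0.  So a ~ b iff a <> b and
   (a = 0 or b = 0 or {a,b} = {1,2}). *)
Definition U1_edge (k : nat) (a b : 'I_k) : bool :=
  (a != b) &&
  [|| (nat_of_ord a == 0)%N, (nat_of_ord b == 0)%N,
      (nat_of_ord a == 1)%N && (nat_of_ord b == 2)%N
    | (nat_of_ord a == 2)%N && (nat_of_ord b == 1)%N].

Definition neg_edge (n k : nat) (f : 'I_k -> 'I_n) (i j : 'I_n) : bool :=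
  [exists a : 'I_k, exists b : 'I_k, [&& f a == i, f b == j & U1_edge a b]].

Definition signed_complete_adj (n : nat) (neg : 'I_n -> 'I_n -> bool) : 'M[int]_n :=
  \matrix_(i, j) (if i == j then 0 else if neg i j then -1 else 1).

From HB Require Import structures.
From mathcomp Require Import all_boot all_order all_algebra.
From mathcomp Require Import ring.
Set Implicit Arguments. Unset Strict Implicit. Unset Printing Implicit Defensive.
Import Order.TTheory GRing.Theory Num.Theory.
Local Open Scope ring_scope.

(* With [J] the all-ones matrix and [N] the 0/1 matrix of the negative edges,
   the adjacency matrix is [J - I - 2 N], so [phi] is [det ((X + 1) I - J + 2 N)].
   Here [- J + 2 N = U W] has rank at most 5: its columns lie in the span of
   [1], [e_v1], [1_nbr1], [e_v2], [e_v3], where [nbr1] is the neighbourhood of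
   [v1] in [U_1]. Sylvester's identity [y^5 det (y I_n + U W) = y^n det (y I_5 + W U)]
   leaves a 5 x 5 determinant, whose entries are weighted sizes of intersections
   of these vertex sets; expanding it gives [(X - 1)] times the quartic. *)

Lemma det_scalar_add_mulmxC (R : comPzRingType) n m (y : R)
    (U : 'M[R]_(n, m)) (W : 'M[R]_(m, n)) :
  y ^+ m * \det (y%:M + U *m W) = y ^+ n * \det (y%:M + W *m U).
Proof.
pose M := block_mx (y%:M : 'M_n) U (- W) (1%:M : 'M_m).
have reduce_l : block_mx 1%:M (- U) 0 1%:M *m M = block_mx (y%:M + U *m W) 0 (- W) 1%:M.
  rewrite mulmx_block !mul1mx !mul0mx !add0r mulmxN mulNmx opprK mulmx1 addrN.
  by rewrite addrC.
have reduce_r : block_mx 1%:M 0 W y%:M *m M = block_mx y%:M U 0 (y%:M + W *m U).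
  rewrite mulmx_block !mul1mx !mul0mx !addr0 mulmxN mul_scalar_mx mul_mx_scalar.
  by rewrite subrr mulmx1 addrC.
move: reduce_l reduce_r => /(congr1 determinant) + /(congr1 determinant).
rewrite !det_mulmx det_ublock det_lblock !det1 !mul1r mulr1 det_lblock det_ublock.
by rewrite det1 mul1r !det_scalar => <- <-.
Qed.

Definition det_of_fun (R : comPzRingType) n (g : nat -> nat -> R) : R :=
  \det (\matrix_(i < n, j < n) g i j).

Lemma det_of_funS (R : comPzRingType) n (g : nat -> nat -> R) :
  det_of_fun n.+1 g =
  \sum_(j < n.+1) g 0%N j * ((-1) ^+ j * det_of_fun n (fun a b => g a.+1 (bump j b))).
Proof.
rewrite /det_of_fun (expand_det_row _ 0); apply: eq_bigr => j _.
rewrite /cofactor add0n !mxE; congr (_ * (_ * \det _)).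
by apply/matrixP => a b; rewrite !mxE.
Qed.

(* The cofactor expansion of [det_of_fun] along the first row, with [foldr] over
   [iota] in place of the locked [\sum], so that [simpl] unfolds it. *)
Fixpoint laplace_det (R : comPzRingType) n (g : nat -> nat -> R) : R :=
  if n is m.+1 then
    foldr (fun j acc => g 0%N j * ((-1) ^+ j *
             laplace_det m (fun a b => g a.+1 (bump j b))) + acc) 0 (iota 0 n)
  else 1.

Lemma det_of_fun_laplace (R : comPzRingType) n (g : nat -> nat -> R) :
  det_of_fun n g = laplace_det n g.
Proof.
have sum_foldr (F : nat -> R) s :
    \sum_(j <- s) F j = foldr (fun j acc => F j + acc) 0 s.
  by elim: s => [|j s IHs]; rewrite ?big_nil // big_cons IHs.
elim: n g => [|n IHn] g; first exact: det_mx00.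
rewrite det_of_funS -(big_mkord xpredT (fun j => g 0%N j * ((-1) ^+ j *
  det_of_fun n (fun a b => g a.+1 (bump j b))))).
under eq_bigr do rewrite IHn.
exact: sum_foldr.
Qed.

Definition U1_quotient_entries (R : pzRingType) (N K : R) : seq (seq R) :=
  [:: [:: - N;        -1; 1 - K;       -1; -1];
      [:: 2 * (K - 1); 0; 2 * (K - 1); 2;  2];
      [:: 2;           2; 0;           0;  0];
      [:: 2;           0; 2;           0;  2];
      [:: 2;           0; 2;           2;  0]].

Lemma det_U1_quotient (R : comPzRingType) (x N K : R) :
  det_of_fun 5 (fun i j =>
    (x + 1) * (i == j)%:R + nth 0 (nth [::] (U1_quotient_entries N K) i) j) =
  (x - 1) * (x ^+ 4 + (6 - N) * x ^+ 3 + (16 - 5 * N) * x ^+ 2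
     + (4 * K - 11 * N + 4 * K * (N - K) + 18) * x
     + (28 * K - 31 * N + 12 * K * (N - K) + 7)).
Proof. rewrite det_of_fun_laplace /=; ring. Qed.

Definition incidence_mx (R : pzSemiRingType) n m (A : 'I_m -> {set 'I_n}) :
  'M[R]_(n, m) :=
  \matrix_(i, c) (i \in A c)%:R.

Lemma tr_incidence_mulmx (R : pzSemiRingType) n m p
    (A : 'I_m -> {set 'I_n}) (B : 'I_p -> {set 'I_n}) :
  (incidence_mx R A)^T *m incidence_mx R B = \matrix_(r, c) #|A r :&: B c|%:R.
Proof.
apply/matrixP => r c; rewrite !mxE -sum1_card [in RHS]big_mkcond natr_sum.
by apply: eq_bigr => i _; rewrite !mxE inE -natrM mulnb; case: (_ && _).
Qed.

Lemma card_set1I (T : finType) (x : T) (A : {set T}) :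
  #|[set x] :&: A| = (x \in A) :> nat.
Proof.
have [xA|xNA] := boolP (x \in A); first by rewrite (setIidPl _) ?cards1 ?sub1set.
by rewrite disjoint_setI0 ?cards0 // disjoints1.
Qed.

Lemma card_setI1 (T : finType) (x : T) (A : {set T}) :
  #|A :&: [set x]| = (x \in A) :> nat.
Proof. by rewrite setIC card_set1I. Qed.

Lemma char_poly_signed_complete_adj n (neg : rel 'I_n) : irreflexive neg ->
  char_poly (signed_complete_adj neg) =
  \det (('X + 1)%:M + \matrix_(i, j) (2 * (neg i j)%:R - 1)).
Proof.
move=> neg_irr; congr (\det _); apply/matrixP => i j; rewrite !mxE.
have [<-|_] := eqVneq i j; first by rewrite neg_irr /=; ring.
by case: (neg i j); rewrite /=; ring.
Qed.

Section U1Embedding.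

Variables (n k : nat) (f : 'I_k -> 'I_n).
Hypotheses (hk : (3 <= k)%N) (f_inj : injective f).

Let a1 : 'I_k := Ordinal (leq_trans (isT : 1 <= 3)%N hk).
Let v1 := f a1.
Let v2 := f (Ordinal (leq_trans (isT : 2 <= 3)%N hk)).
Let v3 := f (Ordinal hk).
Let nbr1 := f @: [set~ a1].

Lemma eq_f_val a b : (f a == f b) = (val a == val b).
Proof. exact: (inj_eq f_inj). Qed.

Lemma mem_nbr1 a : (f a \in nbr1) = (val a != 0%N).
Proof. by rewrite mem_imset // !inE. Qed.

Lemma card_nbr1 : #|nbr1| = k.-1.
Proof. by rewrite (card_imset _ f_inj) cardsC1 card_ord. Qed.

Lemma nbr1_codomF x : x \notin codom f -> (x \in nbr1) = false.
Proof. by apply: contraNF => /imsetP [a _ ->]; exact: codom_f. Qed.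

Lemma eq_codomF x a : x \notin codom f -> (x == f a) = false.
Proof. by apply: contraNF => /eqP ->; exact: codom_f. Qed.

Lemma neg_edge_f a b : neg_edge f (f a) (f b) = U1_edge a b.
Proof.
apply/existsP/idP => [[a' /existsP [b' /and3P [/eqP/f_inj-> /eqP/f_inj-> //]]]|ab].
by exists a; apply/existsP; exists b; rewrite !eqxx.
Qed.

Lemma neg_edge_codomFl i j : i \notin codom f -> neg_edge f i j = false.
Proof.
by apply: contraNF => /existsP [a /existsP [b /and3P [/eqP <- _ _]]]; exact: codom_f.
Qed.

Lemma neg_edge_codomFr i j : j \notin codom f -> neg_edge f i j = false.
Proof.
by apply: contraNF => /existsP [a /existsP [b /and3P [_ /eqP <- _]]]; exact: codom_f.
Qed.

Lemma neg_edge_irr : irreflexive (neg_edge f).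
Proof.
move=> i; have [/codomP [a ->]|iNf] := boolP (i \in codom f).
  by rewrite neg_edge_f /U1_edge eqxx.
exact: neg_edge_codomFl.
Qed.

(* The four summands indicate pairwise disjoint sets of ordered pairs. *)
Lemma neg_edge_U1 i j :
  neg_edge f i j =
  ((i == v1) && (j \in nbr1) + (i \in nbr1) && (j == v1)
   + (i == v2) && (j == v3) + (i == v3) && (j == v2))%N :> nat.
Proof.
have [/codomP [a ->]|iNf] := boolP (i \in codom f); last first.
  by rewrite neg_edge_codomFl // !(eq_codomF _ iNf) (nbr1_codomF iNf).
have [/codomP [b ->]|jNf] := boolP (j \in codom f); last first.
  by rewrite neg_edge_codomFr // !(eq_codomF _ jNf) (nbr1_codomF jNf) !andbF.
rewrite neg_edge_f !eq_f_val !mem_nbr1 /U1_edge -val_eqE /=.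
case: (nat_of_ord a) => [|[|[|x]]]; case: (nat_of_ord b) => [|[|[|y]]] //=.
by rewrite andbF.
Qed.

Definition U1_col_set (c : nat) : {set 'I_n} :=
  match c with 0 => setT | 1 => [set v1] | 2 => nbr1 | 3 => [set v2] | _ => [set v3] end.
Definition U1_row_set (r : nat) : {set 'I_n} :=
  match r with 0 => setT | 1 => nbr1 | 2 => [set v1] | 3 => [set v3] | _ => [set v2] end.
Definition U1_weight : 'rV[{poly int}]_5 := \row_r (if val r is 0 then -1 else 2).

(* [U W = - J + 2 N], where [J = 1 1^T] and the negative-edge matrix is
   [N = e_v1 1_nbr1^T + 1_nbr1 e_v1^T + e_v2 e_v3^T + e_v3 e_v2^T]. *)
Let U := incidence_mx {poly int} (fun c : 'I_5 => U1_col_set c).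
Let W := diag_mx U1_weight *m
  (incidence_mx {poly int} (fun r : 'I_5 => U1_row_set r))^T.

Lemma mulmx_U1 : U *m W = \matrix_(i, j) (2 * (neg_edge f i j)%:R - 1).
Proof.
apply/matrixP => i j; rewrite mulmxA mul_mx_diag !mxE !big_ord_recl big_ord0 !mxE /=.
rewrite neg_edge_U1 !inE !natrD -!mulnb !natrM /=; ring.
Qed.

Lemma det_scalar_add_mulmx_U1 y :
  \det (y%:M + W *m U) =
  det_of_fun 5 (fun r c =>
    y * (r == c)%:R + nth 0 (nth [::] (U1_quotient_entries n%:R k%:R) r) c).
Proof.
have card_nbr1_sub1 : (k.-1)%:R = k%:R - 1 :> {poly int}.
  by rewrite -subn1 natrB // (leq_trans _ hk).
congr (\det _); apply/matrixP => r c.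
rewrite -mulmxA tr_incidence_mulmx mul_diag_mx !mxE.
case: r c => [[|[|[|[|[|r]]]]] Hr] [[|[|[|[|[|c]]]]] Hc] //=.
all: rewrite ?setIT ?setTI ?setIid ?card_set1I ?card_setI1.
all: rewrite ?cardsT ?card_ord ?cards1 ?card_nbr1.
all: rewrite ?inE ?mem_nbr1 ?eq_f_val /= ?card_nbr1_sub1; ring.
Qed.

End U1Embedding.

Theorem lemma3p5 (n k : nat) (hk : (3 <= k)%N) (hkn : (k <= n)%N)
    (f : 'I_k -> 'I_n) (hf : injective f) :
  let u : int := n%:Z - k%:Z in
  ('X + 1) ^+ 5 * char_poly (signed_complete_adj (neg_edge f)) =
  ('X + 1) ^+ n * ('X - 1) *
    ('X ^+ 4 + (6 - n%:Z)%:P * 'X ^+ 3 + (16 - 5 * n%:Z)%:P * 'X ^+ 2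
     + (4 * k%:Z - 11 * n%:Z + 4 * k%:Z * u + 18)%:P * 'X
     + (28 * k%:Z - 31 * n%:Z + 12 * k%:Z * u + 7)%:P).
Proof.
move=> u.
rewrite (char_poly_signed_complete_adj (neg_edge_irr hf)) -(mulmx_U1 hk hf).
rewrite det_scalar_add_mulmxC (det_scalar_add_mulmx_U1 hk hf) (det_U1_quotient 'X) mulrA.
congr (_ * _).
rewrite /u -!natz !(rmorph_nat, rmorphB, rmorphD, rmorphM).
ring.
Qed.
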